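(* There is an absolute constant $C$ such that for all positive integers $d$ and all $x\in\mathbb{R}$ with $|x|\le\sqrt d$, $$|r_d(x)|\le C\max\left\{\frac{|x|^3}{\sqrt d},\frac{|x|}{\sqrt d},\frac{x^2}{d},\frac1d\right\}.$$
   Context: The Hermite polynomials $(H_k)_{k\ge0}$ are the orthonormal polynomials for $\mathcal{N}(0,1)$ with $\deg H_k=k$ and positive leading coefficient (the probabilist's Hermite polynomials divided by $\sqrt{k!}$). The remainder $r_d(x)$ is defined by $$H_d(x)=\exp\!\left(\frac{x^2}{4}\right)\left(\frac{2}{\pi d}\right)^{1/4}\left(\sin\!\left[\frac{1-d}{2}\pi+\sqrt d\,x\right]+r_d(x)\right).$$ *)

From Stdlib Require Import Reals Lra Lia Factorial.
Open Scope R_scope.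

(* Probabilist's Hermite polynomials He_k, evaluated at x, via the standard
   three-term recurrence He_0 = 1, He_1 = x, He_{k+1} = x He_k - k He_{k-1}.
   He_pair k x = (He_k x, He_{k+1} x). *)
Fixpoint He_pair (k : nat) (x : R) : R * R :=
  match k with
  | O => (1, x)
  | S k' => let (a, b) := He_pair k' x in (b, x * b - INR (S k') * a)
  end.

Definition He (k : nat) (x : R) : R := fst (He_pair k x).

(* Orthonormal Hermite polynomials for N(0,1): H_k = He_k / sqrt(k!). *)
Definition H (k : nat) (x : R) : R := He k x / sqrt (INR (Factorial.fact k)).

(* The remainder r_d(x), defined (for d >= 1) by
   H_d(x) = exp(x^2/4) (2/(pi d))^(1/4) (sin((1-d)/2 pi + sqrt d x) + r_d(x)). *)
Definition r (d : nat) (x : R) : R :=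
  H d x / (exp (x ^ 2 / 4) * Rpower (2 / (PI * INR d)) (1 / 4))
  - sin ((1 - INR d) / 2 * PI + sqrt (INR d) * x).

(* Write u(x) = H_d(x) exp(-x^2/4) (2/(pi d))^(-1/4) ([hermite_fn]), so that
   r_d(x) = u(x) - sin(phi + sqrt d x) with phi = (1 - d) pi / 2, and u solves
   u'' + (d + 1/2 - x^2/4) u = 0. On [0, sqrt d] compare u with the solution g
   ([osc]) of g'' + d g = 0 having the same initial data. The energy
   u'^2 + (d + 1/2 - x^2/4) u^2 decreases for x >= 0, so |u| <= 2; then the
   square root of the deviation energy (u' - g')^2 + d (u - g)^2 grows at rate
   at most x^2/2 + 1, whence sqrt d |u - g| <= x^3/6 + x.
   The initial data are u(0) = t sin phi and u'(0) = sqrt d t cos phi, where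
   t^4 is a ratio of consecutive Wallis integrals, hence within 1/d of 1; so
   |g(x) - sin(phi + sqrt d x)| <= 2/d. Negative x follow from the parity of
   H_d, and C = 4 works. *)

From Stdlib Require Import Reals Lra Lia Factorial.
From Coquelicot Require Import Coquelicot.
Open Scope R_scope.

Lemma Derive_of_is_derive (f : R -> R) (x l : R) :
  is_derive f x l -> Derive (fun t => f t) x = l.
Proof. apply is_derive_unique. Qed.

Lemma nonincreasing_of_derive_nonpos (f df : R -> R) (a b : R) :
  a <= b ->
  (forall x, a <= x <= b -> is_derive f x (df x)) ->
  (forall x, a <= x <= b -> df x <= 0) ->
  f b <= f a.
Proof.
  intros Hab Hd Hneg.
  destruct (MVT_gen f a b df) as [c [Hc E]]; rewrite ?Rmin_left, ?Rmax_right in * by lra.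
  - intros x Hx. apply Hd. lra.
  - intros x Hx. apply continuity_pt_filterlim, (ex_derive_continuous f).
    eexists. apply Hd. exact Hx.
  - pose proof (Hneg c Hc). nra.
Qed.

Lemma le_of_forall_le_sqrt_add (a b : R) :
  (forall delta, 0 < delta -> a <= sqrt delta + b) -> a <= b.
Proof.
  intro H. destruct (Rle_or_lt a b) as [|Hlt]; [assumption|].
  specialize (H (((a - b) / 2) ^ 2) ltac:(nra)).
  rewrite sqrt_pow2 in H by lra. lra.
Qed.

Lemma sin_sub_nPI z n : sin (z - INR n * PI) = (-1) ^ n * sin z.
Proof.
  induction n as [|n IH]; [cbn; rewrite Rmult_0_l, Rminus_0_r; ring|].
  rewrite S_INR, Rmult_plus_distr_r, Rmult_1_l, Rminus_plus_distr, sin_minus, IH, cos_PI, sin_PI.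
  cbn. ring.
Qed.

Lemma cos_sub_nPI z n : cos (z - INR n * PI) = (-1) ^ n * cos z.
Proof.
  induction n as [|n IH]; [cbn; rewrite Rmult_0_l, Rminus_0_r; ring|].
  rewrite S_INR, Rmult_plus_distr_r, Rmult_1_l, Rminus_plus_distr, cos_minus, IH, cos_PI, sin_PI.
  cbn. ring.
Qed.

Lemma neg1_pow_sqr m : ((-1) ^ m) ^ 2 = 1.
Proof. rewrite <- pow2_abs, pow_1_abs. ring. Qed.

Lemma He_succ_succ k x : He (S (S k)) x = x * He (S k) x - INR (S k) * He k x.
Proof. unfold He; simpl; destruct (He_pair k x); reflexivity. Qed.

Lemma He_succ k x : He (S k) x = x * He k x - INR k * He (pred k) x.
Proof.
  destruct k as [|k]; [cbn; ring|].
  apply He_succ_succ.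
Qed.

Lemma He_opp k x : He k (- x) = (-1) ^ k * He k x.
Proof.
  enough (E : He_pair k (- x) = ((-1) ^ k * He k x, (-1) ^ S k * He (S k) x))
    by (unfold He at 1; rewrite E; reflexivity).
  induction k as [|k IH]; [cbn; f_equal; ring|].
  rewrite He_succ_succ. cbn [He_pair]. rewrite IH. cbn. f_equal; ring.
Qed.

Lemma is_derive_He k (x : R) : is_derive (He k) x (INR k * He (pred k) x).
Proof.
  revert x.
  enough (IH : forall x : R, is_derive (He k) x (INR k * He (pred k) x) /\
                         is_derive (He (S k)) x (INR (S k) * He k x))
    by (intro x; apply IH).
  induction k as [|k IH]; intro x; split.
  - apply (is_derive_ext (fun _ => 1)); [reflexivity|].
    auto_derive; [easy | unfold He; simpl; ring].
  - apply (is_derive_ext (fun t => t)); [reflexivity|].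
    auto_derive; [easy | unfold He; simpl; ring].
  - apply IH.
  - apply (is_derive_ext (fun t => t * He (S k) t - INR (S k) * He k t)).
    { intro t. symmetry. apply He_succ_succ. }
    destruct (IH x) as [Hk HSk].
    auto_derive.
    + repeat split; eexists; eassumption.
    + rewrite (Derive_of_is_derive _ _ _ Hk), (Derive_of_is_derive _ _ _ HSk).
      change (match k with 0%nat => 1 | S _ => INR k + 1 end) with (INR (S k)).
      rewrite He_succ, !S_INR. ring.
Qed.

Lemma He_odd_0 m : He (S (2 * m)) 0 = 0.
Proof.
  pose proof (He_opp (S (2 * m)) 0) as E.
  rewrite Ropp_0, pow_1_odd in E. lra.
Qed.

Lemma He_even_0_sign m : 0 < (-1) ^ m * He (2 * m) 0.
Proof.
  induction m as [|m IH]; [cbn; lra|].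
  replace (2 * S m)%nat with (S (S (2 * m))) by lia.
  rewrite He_succ_succ, Rmult_0_l, Rminus_0_l.
  replace ((-1) ^ S m * - (INR (S (2 * m)) * He (2 * m) 0))
    with (INR (S (2 * m)) * ((-1) ^ m * He (2 * m) 0)) by (cbn; ring).
  apply Rmult_lt_0_compat; [apply lt_0_INR; lia | exact IH].
Qed.

(** * Wallis integrals *)

Definition wallis (n : nat) : R := RInt (fun t => sin t ^ n) 0 (PI / 2).

Lemma ex_RInt_sin_pow n a b : ex_RInt (fun t => sin t ^ n) a b.
Proof.
  apply (@ex_RInt_continuous R_CompleteNormedModule). intros t _.
  apply (ex_derive_continuous (fun t => sin t ^ n)). auto_derive. easy.
Qed.

Lemma wallis_0 : wallis 0 = PI / 2.
Proof.
  unfold wallis. change (fun t : R => sin t ^ 0) with (fun _ : R => 1).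
  rewrite RInt_const. unfold scal; cbn; unfold mult; cbn. ring.
Qed.

Lemma wallis_1 : wallis 1 = 1.
Proof.
  unfold wallis. apply is_RInt_unique.
  replace 1 with ((- cos (PI / 2)) - (- cos 0)) by (rewrite cos_PI2, cos_0; ring).
  apply (is_RInt_derive (fun t => - cos t)).
  - intros t _. auto_derive; [easy | ring].
  - intros t _. apply (ex_derive_continuous (fun t => sin t ^ 1)). auto_derive. easy.
Qed.

Lemma wallis_rec n : INR (S (S n)) * wallis (S (S n)) = INR (S n) * wallis n.
Proof.
  set (g := fun t => - cos t * sin t ^ S n).
  assert (Hg : is_RInt (fun t => INR (S (S n)) * sin t ^ S (S n) - INR (S n) * sin t ^ n)
                 0 (PI / 2) (g (PI / 2) - g 0)).
  { apply (is_RInt_derive g).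
    - intros t _. unfold g. auto_derive; [easy|].
      change (match n with 0%nat => 1 | S _ => INR n + 1 end) with (INR (S n)).
      pose proof (sin2_cos2 t) as E. unfold Rsqr in E.
      apply Rminus_diag_uniq.
      transitivity (INR (S n) * sin t ^ n * (1 - (sin t * sin t + cos t * cos t)));
        [rewrite !S_INR; cbn [pow]; ring | rewrite E; ring].
    - intros t _.
      apply (ex_derive_continuous
               (fun t => INR (S (S n)) * sin t ^ S (S n) - INR (S n) * sin t ^ n)).
      auto_derive. easy. }
  unfold g in Hg. rewrite cos_PI2, sin_0, pow_i in Hg by lia.
  assert (Hw : is_RInt (fun t => INR (S (S n)) * sin t ^ S (S n) - INR (S n) * sin t ^ n)
                 0 (PI / 2) (INR (S (S n)) * wallis (S (S n)) - INR (S n) * wallis n)).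
  { exact (is_RInt_minus _ _ _ _ _ _
      (is_RInt_scal _ _ _ _ _ (RInt_correct _ _ _ (ex_RInt_sin_pow (S (S n)) 0 (PI / 2))))
      (is_RInt_scal _ _ _ _ _ (RInt_correct _ _ _ (ex_RInt_sin_pow n 0 (PI / 2))))). }
  pose proof (is_RInt_unique _ _ _ _ Hg) as E1.
  rewrite (is_RInt_unique _ _ _ _ Hw) in E1. lra.
Qed.

Lemma wallis_succ_le n : wallis (S n) <= wallis n.
Proof.
  pose proof PI_RGT_0.
  apply RInt_le; [lra | apply ex_RInt_sin_pow | apply ex_RInt_sin_pow |].
  intros t Ht.
  assert (0 <= sin t) by (apply sin_ge_0; lra).
  pose proof (SIN_bound t). pose proof (pow_le (sin t) n).
  cbn [pow]. nra.
Qed.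

Lemma wallis_mul n : 2 * INR (S n) * wallis n * wallis (S n) = PI.
Proof.
  induction n as [|n IH].
  - rewrite wallis_0, wallis_1. cbn. field.
  - transitivity (2 * wallis (S n) * (INR (S (S n)) * wallis (S (S n)))); [ring|].
    rewrite wallis_rec, <- IH. ring.
Qed.

Lemma wallis_pos n : 0 < wallis n.
Proof.
  assert (Hge : forall k, 0 <= wallis k).
  { intro k. pose proof PI_RGT_0.
    apply RInt_ge_0; [lra | apply ex_RInt_sin_pow |].
    intros t Ht. apply pow_le, sin_ge_0; lra. }
  destruct (Hge n) as [|Hz]; [assumption|].
  pose proof (wallis_mul n) as E. rewrite <- Hz in E. pose proof PI_RGT_0. lra.
Qed.

(* By [wallis_mul] the two quantities are [wallis n / wallis (S n)] and its
   inverse; [wallis_succ_le] and [wallis_rec] squeeze that ratio into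
   [[1, 1 + 1 / (n + 1)]]. This is the Wallis product with an explicit error. *)
Lemma wallis_sqr_near_one n :
  Rabs (2 * INR (S n) * wallis n ^ 2 / PI - 1) <= 1 / INR (S n) /\
  Rabs (2 * INR (S n) * wallis (S n) ^ 2 / PI - 1) <= 1 / INR (S n).
Proof.
  pose proof (wallis_mul n) as Hmul. pose proof (wallis_rec n) as Hrec.
  pose proof (wallis_succ_le n). pose proof (wallis_succ_le (S n)).
  pose proof (wallis_pos n). pose proof (wallis_pos (S n)).
  assert (Hn : 0 < INR (S n)) by (apply lt_0_INR; lia).
  rewrite S_INR in Hrec. set (a := wallis n) in *. set (b := wallis (S n)) in *.
  set (N := INR (S n)) in *.
  assert (Hq : 1 <= a / b <= 1 + 1 / N).
  { assert (a <= (1 + 1 / N) * b).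
    { apply Rle_trans with ((N + 1) / N * wallis (S (S n))).
      - right. replace ((N + 1) / N * wallis (S (S n))) with ((N + 1) * wallis (S (S n)) / N)
          by (field; lra).
        rewrite Hrec. field. lra.
      - replace ((N + 1) / N) with (1 + 1 / N) by (field; lra).
        apply Rmult_le_compat_l; [|assumption].
        pose proof (Rinv_0_lt_compat N Hn). lra. }
    split; apply (Rmult_le_reg_r b); try lra;
      unfold Rdiv at 1; rewrite Rmult_assoc, Rinv_l, Rmult_1_r by lra; lra. }
  set (q := a / b) in *.
  assert (E1 : 2 * N * a ^ 2 / PI = q) by (unfold q; rewrite <- Hmul; field; lra).
  assert (E2 : 2 * N * b ^ 2 / PI = / q) by (unfold q; rewrite <- Hmul; field; lra).
  assert (Hqq : q * / q = 1) by (field; lra).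
  pose proof (Rinv_0_lt_compat q ltac:(lra)).
  rewrite E1, E2. split; apply Rabs_le; split; nra.
Qed.

Lemma He_even_0_sqr m : He (2 * m) 0 ^ 2 = 2 / PI * INR (fact (2 * m)) * wallis (2 * m).
Proof.
  pose proof PI_RGT_0.
  induction m as [|m IH]; [rewrite Nat.mul_0_r, wallis_0; cbn; field; lra|].
  replace (2 * S m)%nat with (S (S (2 * m))) by lia.
  rewrite He_succ_succ, Rmult_0_l, Rminus_0_l.
  assert (Hw : wallis (S (S (2 * m))) = INR (S (2 * m)) / INR (S (S (2 * m))) * wallis (2 * m)).
  { apply (Rmult_eq_reg_l (INR (S (S (2 * m))))); [|apply not_0_INR; lia].
    rewrite wallis_rec. field. apply not_0_INR. lia. }
  rewrite Hw, !fact_simpl, !mult_INR.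
  replace ((- (INR (S (2 * m)) * He (2 * m) 0)) ^ 2)
    with (INR (S (2 * m)) ^ 2 * He (2 * m) 0 ^ 2) by ring.
  rewrite IH. field. split; [apply not_0_INR; lia | lra].
Qed.

(** * Comparison with a free oscillation *)

Section FreeOscillationComparison.

Variables (u v : R -> R) (D w : R).
Hypothesis w_pos : 0 < w.
Hypothesis w_sqr : w * w = D.
Hypothesis u_derive : forall x : R, is_derive u x (v x).
Hypothesis v_derive : forall x : R, is_derive v x (- (D + 1 / 2 - x ^ 2 / 4) * u x).
Hypothesis energy_0 : v 0 ^ 2 + (D + 1 / 2) * u 0 ^ 2 <= 3 * D.

Definition osc (x : R) : R := u 0 * cos (w * x) + v 0 / w * sin (w * x).
Definition osc' (x : R) : R := - u 0 * w * sin (w * x) + v 0 * cos (w * x).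

Definition deviation_energy (x : R) : R := (v x - osc' x) ^ 2 + D * (u x - osc x) ^ 2.

Lemma Rabs_u_le_2 x : 0 <= x -> x ^ 2 <= D -> Rabs (u x) <= 2.
Proof.
  intros Hx HxD.
  assert (Hdecr : v x ^ 2 + (D + 1 / 2 - x ^ 2 / 4) * u x ^ 2
                  <= v 0 ^ 2 + (D + 1 / 2 - 0 ^ 2 / 4) * u 0 ^ 2).
  { apply (nonincreasing_of_derive_nonpos
             (fun t => v t ^ 2 + (D + 1 / 2 - t ^ 2 / 4) * u t ^ 2) (fun t => - (t / 2) * u t ^ 2));
      [exact Hx| |].
    - intros t _. auto_derive.
      + repeat split; eexists; apply u_derive || apply v_derive.
      + rewrite (Derive_of_is_derive _ _ _ (u_derive t)), (Derive_of_is_derive _ _ _ (v_derive t)).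
        field.
    - intros t Ht. pose proof (pow2_ge_0 (u t)). nra. }
  assert (Hu2 : u x ^ 2 <= 4).
  { pose proof (pow2_ge_0 (v x)). pose proof (pow2_ge_0 (u x)).
    replace (0 ^ 2 / 4) with 0 in Hdecr by field.
    assert (3 * D / 4 * u x ^ 2 <= (D + 1 / 2 - x ^ 2 / 4) * u x ^ 2)
      by (apply Rmult_le_compat_r; lra).
    nra. }
  rewrite <- (pow2_abs (u x)) in Hu2. pose proof (Rabs_pos (u x)). nra.
Qed.

Lemma is_derive_deviation_energy x :
  is_derive deviation_energy x (2 * (v x - osc' x) * ((x ^ 2 / 4 - 1 / 2) * u x)).
Proof.
  unfold deviation_energy, osc, osc'. auto_derive.
  - repeat split; eexists; apply u_derive || apply v_derive.
  - rewrite (Derive_of_is_derive _ _ _ (u_derive x)), (Derive_of_is_derive _ _ _ (v_derive x)).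
    rewrite <- w_sqr. field. lra.
Qed.

Lemma deviation_energy_nonneg x : 0 <= deviation_energy x.
Proof.
  unfold deviation_energy. pose proof (pow2_ge_0 (v x - osc' x)).
  pose proof (pow2_ge_0 (u x - osc x)). nra.
Qed.

Lemma deviation_energy_0 : deviation_energy 0 = 0.
Proof.
  unfold deviation_energy, osc, osc'. rewrite Rmult_0_r, sin_0, cos_0. field. lra.
Qed.

Lemma deviation_slope_le delta t : 0 < delta -> 0 <= t -> t ^ 2 <= D ->
  2 * (v t - osc' t) * ((t ^ 2 / 4 - 1 / 2) * u t) / (2 * sqrt (deviation_energy t + delta))
  <= t ^ 2 / 2 + 1.
Proof.
  intros Hdelta Ht HtD. pose proof (deviation_energy_nonneg t).
  set (S := sqrt (deviation_energy t + delta)).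
  set (e' := v t - osc' t).
  assert (HS : 0 < S) by (apply sqrt_lt_R0; lra).
  assert (He' : Rabs e' <= S).
  { rewrite <- sqrt_Rsqr_abs. apply sqrt_le_1_alt.
    unfold Rsqr, deviation_energy. fold e'.
    pose proof (pow2_ge_0 (u t - osc t)). nra. }
  assert (Hf : Rabs ((t ^ 2 / 4 - 1 / 2) * u t) <= t ^ 2 / 2 + 1).
  { rewrite Rabs_mult.
    assert (Rabs (t ^ 2 / 4 - 1 / 2) <= t ^ 2 / 4 + 1 / 2)
      by (apply Rabs_le; pose proof (pow2_ge_0 t); lra).
    pose proof (Rabs_u_le_2 t Ht HtD).
    pose proof (Rabs_pos (t ^ 2 / 4 - 1 / 2)). pose proof (Rabs_pos (u t)). nra. }
  assert (e' * ((t ^ 2 / 4 - 1 / 2) * u t) <= S * (t ^ 2 / 2 + 1)).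
  { eapply Rle_trans; [apply Rle_abs|]. rewrite Rabs_mult.
    apply Rmult_le_compat; auto using Rabs_pos. }
  apply (Rmult_le_reg_r (2 * S)); [lra|].
  unfold Rdiv. rewrite Rmult_assoc, Rinv_l, Rmult_1_r by lra. nra.
Qed.

(* The shift by [delta] keeps the square root differentiable where the
   deviation vanishes. *)
Lemma sqrt_deviation_energy_le delta X : 0 < delta -> 0 <= X -> X ^ 2 <= D ->
  sqrt (deviation_energy X + delta) <= sqrt delta + (X ^ 3 / 6 + X).
Proof.
  intros Hdelta HX HXD.
  enough (H : sqrt (deviation_energy X + delta) - (X ^ 3 / 6 + X)
              <= sqrt (deviation_energy 0 + delta) - (0 ^ 3 / 6 + 0))
    by (rewrite deviation_energy_0, Rplus_0_l in H; lra).
  apply (nonincreasing_of_derive_nonpos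
           (fun t => sqrt (deviation_energy t + delta) - (t ^ 3 / 6 + t))
           (fun t => 2 * (v t - osc' t) * ((t ^ 2 / 4 - 1 / 2) * u t)
                     / (2 * sqrt (deviation_energy t + delta)) - (t ^ 2 / 2 + 1)));
    [exact HX| |].
  - intros t _. pose proof (deviation_energy_nonneg t).
    auto_derive.
    + repeat split; [eexists; apply is_derive_deviation_energy | lra].
    + rewrite (Derive_of_is_derive _ _ _ (is_derive_deviation_energy t)). field.
      apply Rgt_not_eq, sqrt_lt_R0. lra.
  - intros t Ht. apply Rle_minus, deviation_slope_le; [lra | lra | nra].
Qed.

Lemma comparison_with_osc X : 0 <= X -> X ^ 2 <= D -> w * Rabs (u X - osc X) <= X ^ 3 / 6 + X.
Proof.
  intros HX HXD. apply le_of_forall_le_sqrt_add. intros delta Hdelta.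
  eapply Rle_trans; [|apply (sqrt_deviation_energy_le delta X Hdelta HX HXD)].
  rewrite <- (sqrt_pow2 (w * Rabs (u X - osc X))) by (pose proof (Rabs_pos (u X - osc X)); nra).
  apply sqrt_le_1_alt.
  unfold deviation_energy. rewrite Rpow_mult_distr, pow2_abs.
  pose proof (pow2_ge_0 (v X - osc' X)). rewrite <- w_sqr. nra.
Qed.

End FreeOscillationComparison.

Definition hermite_scale (d : nat) : R := Rpower (2 / (PI * INR d)) (1 / 4).

Definition hermite_phase (d : nat) : R := (1 - INR d) / 2 * PI.

Definition hermite_fn (d : nat) (x : R) : R :=
  He d x * exp (- (x ^ 2 / 4)) / (sqrt (INR (fact d)) * hermite_scale d).

Definition hermite_fn' (d : nat) (x : R) : R :=
  (INR d * He (pred d) x - x / 2 * He d x) * exp (- (x ^ 2 / 4))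
  / (sqrt (INR (fact d)) * hermite_scale d).

Lemma hermite_scale_pos d : 0 < hermite_scale d.
Proof. apply exp_pos. Qed.

Lemma sqrt_fact_pos d : 0 < sqrt (INR (fact d)).
Proof. apply sqrt_lt_R0, lt_0_INR, lt_O_fact. Qed.

Lemma hermite_scale_pow4 d : (0 < d)%nat -> hermite_scale d ^ 4 = 2 / (PI * INR d).
Proof.
  intro Hd. pose proof PI_RGT_0. pose proof (lt_0_INR _ Hd).
  unfold hermite_scale. rewrite <- Rpower_pow by apply exp_pos.
  rewrite Rpower_mult. replace (1 / 4 * INR 4) with 1 by (cbn; field).
  apply Rpower_1. apply Rdiv_lt_0_compat; [lra | now apply Rmult_lt_0_compat].
Qed.

Lemma r_eq_hermite_fn d x :
  r d x = hermite_fn d x - sin (hermite_phase d + sqrt (INR d) * x).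
Proof.
  unfold r, H, hermite_fn, hermite_phase, hermite_scale. rewrite exp_Ropp.
  pose proof (hermite_scale_pos d). pose proof (sqrt_fact_pos d). pose proof (exp_pos (x ^ 2 / 4)).
  unfold hermite_scale in *. field. repeat split; lra.
Qed.

Lemma is_derive_hermite_fn d (x : R) : is_derive (hermite_fn d) x (hermite_fn' d x).
Proof.
  pose proof (hermite_scale_pos d). pose proof (sqrt_fact_pos d).
  unfold hermite_fn, hermite_fn'. auto_derive.
  - eexists; apply is_derive_He.
  - rewrite (Derive_of_is_derive _ _ _ (is_derive_He d x)).
    change (x * (x * 1) * / 4) with (x ^ 2 / 4). field. split; lra.
Qed.

Lemma is_derive_hermite_fn' d (x : R) :
  is_derive (hermite_fn' d) x (- (INR d + 1 / 2 - x ^ 2 / 4) * hermite_fn d x).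
Proof.
  pose proof (hermite_scale_pos d). pose proof (sqrt_fact_pos d).
  assert (Hrec : INR d * (INR (pred d) * He (pred (pred d)) x)
                 = INR d * (x * He (pred d) x - He d x)).
  { destruct d as [|k]; [cbn; ring|]. rewrite (He_succ k). cbn [pred]. ring. }
  unfold hermite_fn, hermite_fn'. auto_derive.
  - repeat split; eexists; apply is_derive_He.
  - rewrite (Derive_of_is_derive _ _ _ (is_derive_He d x)),
            (Derive_of_is_derive _ _ _ (is_derive_He (pred d) x)).
    change (x * (x * 1) * / 4) with (x ^ 2 / 4).
    replace (INR d * (1 * (INR (pred d) * He (pred (pred d)) x)))
      with (INR d * (x * He (pred d) x - He d x)) by (rewrite Rmult_1_l; symmetry; exact Hrec).
    field. split; lra.
Qed.

Lemma hermite_fn_0 d : hermite_fn d 0 = He d 0 / (sqrt (INR (fact d)) * hermite_scale d).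
Proof.
  unfold hermite_fn. replace (- (0 ^ 2 / 4)) with 0 by field.
  rewrite exp_0, Rmult_1_r. reflexivity.
Qed.

Lemma hermite_fn'_0 d :
  hermite_fn' d 0 = INR d * He (pred d) 0 / (sqrt (INR (fact d)) * hermite_scale d).
Proof.
  unfold hermite_fn'. replace (- (0 ^ 2 / 4)) with 0 by field.
  rewrite exp_0, Rmult_1_r. unfold Rdiv. rewrite !Rmult_0_l, Rminus_0_r. reflexivity.
Qed.

(** * Initial data *)

Definition is_initial_amplitude (d : nat) (t : R) : Prop :=
  0 < t /\ Rabs (t ^ 4 - 1) <= 1 / INR d /\
  hermite_fn d 0 = t * sin (hermite_phase d) /\
  hermite_fn' d 0 = sqrt (INR d) * t * cos (hermite_phase d).

Lemma amplitude_pow4 d j t : (0 < d)%nat ->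
  t ^ 2 * hermite_scale d ^ 2 = 2 / PI * wallis j -> t ^ 4 = 2 * INR d * wallis j ^ 2 / PI.
Proof.
  intros Hd Ht. pose proof PI_RGT_0. pose proof (lt_0_INR _ Hd).
  pose proof (hermite_scale_pos d) as Hs.
  pose proof (hermite_scale_pow4 d Hd) as Hs4.
  replace (t ^ 4) with ((t ^ 2 * hermite_scale d ^ 2) ^ 2 / hermite_scale d ^ 4) by (field; lra).
  rewrite Ht, Hs4. field. lra.
Qed.

Lemma initial_amplitude_odd m : exists t, is_initial_amplitude (S (2 * m)) t.
Proof.
  set (d := S (2 * m)). pose proof PI_RGT_0.
  assert (Hd : 0 < INR d) by (apply lt_0_INR; lia).
  pose proof (sqrt_lt_R0 _ Hd) as Hw.
  pose proof (sqrt_fact_pos d). pose proof (hermite_scale_pos d).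
  set (N := sqrt (INR (fact d)) * hermite_scale d).
  assert (HN : 0 < N) by (apply Rmult_lt_0_compat; assumption).
  set (t := (-1) ^ m * He (2 * m) 0 * sqrt (INR d) / N).
  assert (Hphase : hermite_phase d = 0 - INR m * PI)
    by (unfold hermite_phase, d; rewrite S_INR, mult_INR; cbn; field).
  exists t. unfold is_initial_amplitude.
  rewrite Hphase, sin_sub_nPI, cos_sub_nPI, sin_0, cos_0, hermite_fn_0, hermite_fn'_0.
  fold N. rewrite (He_odd_0 m : He d 0 = 0). change (pred d) with (2 * m)%nat.
  repeat split.
  - apply Rdiv_lt_0_compat; [apply Rmult_lt_0_compat|]; [apply He_even_0_sign | |]; assumption.
  - rewrite (amplitude_pow4 d (2 * m) t); [apply (wallis_sqr_near_one (2 * m)) | lia |].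
    unfold t, N.
    replace (((-1) ^ m * He (2 * m) 0 * sqrt (INR d) / (sqrt (INR (fact d)) * hermite_scale d)) ^ 2
             * hermite_scale d ^ 2)
      with (((-1) ^ m) ^ 2 * He (2 * m) 0 ^ 2 * sqrt (INR d) ^ 2 / sqrt (INR (fact d)) ^ 2)
      by (field; lra).
    rewrite neg1_pow_sqr, He_even_0_sqr, !pow2_sqrt by (apply pos_INR || lra).
    unfold d. rewrite fact_simpl, mult_INR. field.
    repeat split; [lra | apply not_0_INR, fact_neq_0 | apply not_0_INR; lia].
  - unfold Rdiv. ring.
  - unfold t. replace (INR d) with (sqrt (INR d) ^ 2) at 1 by (apply pow2_sqrt; lra).
    transitivity (((-1) ^ m) ^ 2 * (sqrt (INR d) ^ 2 * He (2 * m) 0 / N));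
      [rewrite neg1_pow_sqr; ring | field; lra].
Qed.

Lemma initial_amplitude_even m : exists t, is_initial_amplitude (2 * S m) t.
Proof.
  set (d := (2 * S m)%nat). pose proof PI_RGT_0.
  pose proof (sqrt_fact_pos d). pose proof (hermite_scale_pos d).
  set (N := sqrt (INR (fact d)) * hermite_scale d).
  assert (HN : 0 < N) by (apply Rmult_lt_0_compat; assumption).
  set (t := (-1) ^ S m * He d 0 / N).
  assert (Hphase : hermite_phase d = - (PI / 2) - INR m * PI)
    by (unfold hermite_phase, d; rewrite mult_INR, (S_INR m); cbn; field).
  exists t. unfold is_initial_amplitude.
  rewrite Hphase, sin_sub_nPI, cos_sub_nPI, sin_neg, cos_neg, sin_PI2, cos_PI2,
    hermite_fn_0, hermite_fn'_0.
  fold N. replace (pred d) with (S (2 * m)) by (unfold d; lia). rewrite He_odd_0.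
  repeat split.
  - apply Rdiv_lt_0_compat; [apply He_even_0_sign | assumption].
  - rewrite (amplitude_pow4 d d t); [| unfold d; lia |].
    + unfold d. replace (2 * S m)%nat with (S (S (2 * m))) by lia.
      apply (wallis_sqr_near_one (S (2 * m))).
    + unfold t, N.
      replace (((-1) ^ S m * He d 0 / (sqrt (INR (fact d)) * hermite_scale d)) ^ 2
               * hermite_scale d ^ 2)
        with (((-1) ^ S m) ^ 2 * He d 0 ^ 2 / sqrt (INR (fact d)) ^ 2) by (field; lra).
      unfold d. rewrite neg1_pow_sqr, He_even_0_sqr, pow2_sqrt by apply pos_INR.
      field. split; [lra | apply not_0_INR, fact_neq_0].
  - unfold t. transitivity (((-1) ^ S m) ^ 2 * (He d 0 / N));
      [rewrite neg1_pow_sqr; ring | cbn [pow]; field; lra].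
  - unfold Rdiv. ring.
Qed.

Lemma initial_amplitude d : (1 <= d)%nat -> exists t, is_initial_amplitude d t.
Proof.
  intro Hd. destruct (Nat.Even_or_Odd d) as [[m ->] | [m ->]].
  - destruct m as [|m]; [lia|]. apply initial_amplitude_even.
  - replace (2 * m + 1)%nat with (S (2 * m)) by lia. apply initial_amplitude_odd.
Qed.

Lemma initial_data_estimates (D t s c u0 v0 : R) :
  1 <= D -> 0 < t -> Rabs (t ^ 4 - 1) <= 1 / D -> s ^ 2 + c ^ 2 = 1 ->
  u0 = t * s -> v0 = sqrt D * t * c ->
  Rabs (u0 - s) + Rabs (v0 / sqrt D - c) <= 2 / D /\
  v0 ^ 2 + (D + 1 / 2) * u0 ^ 2 <= 3 * D.
Proof.
  intros HD Ht Ht4 Hsc -> ->.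
  assert (Hw : 0 < sqrt D) by (apply sqrt_lt_R0; lra).
  assert (HinvD : 0 < 1 / D <= 1).
  { assert (1 / D * D = 1) by (field; lra). split; [apply Rdiv_lt_0_compat|]; nra. }
  assert (Ht1 : Rabs (t - 1) <= 1 / D).
  { eapply Rle_trans; [|exact Ht4].
    replace (t ^ 4 - 1) with ((t - 1) * ((t + 1) * (t ^ 2 + 1))) by ring.
    rewrite Rabs_mult, (Rabs_pos_eq ((t + 1) * (t ^ 2 + 1))) by nra.
    assert (1 <= (t + 1) * (t ^ 2 + 1)) by nra.
    pose proof (Rabs_pos (t - 1)). nra. }
  assert (Ht2 : t ^ 2 <= 2).
  { pose proof (Rle_abs (t ^ 4 - 1)). nra. }
  split.
  - replace (t * s - s) with ((t - 1) * s) by ring.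
    replace (sqrt D * t * c / sqrt D - c) with ((t - 1) * c) by (field; lra).
    rewrite !Rabs_mult.
    assert (Rabs s <= 1) by (apply Rabs_le; nra).
    assert (Rabs c <= 1) by (apply Rabs_le; nra).
    pose proof (Rabs_pos s). pose proof (Rabs_pos c). pose proof (Rabs_pos (t - 1)).
    replace (2 / D) with (1 / D + 1 / D) by (field; lra). nra.
  - rewrite Rpow_mult_distr, (Rpow_mult_distr (sqrt D)), pow2_sqrt by lra.
    replace (c ^ 2) with (1 - s ^ 2) by lra.
    assert (t ^ 2 * s ^ 2 <= 2)
      by (pose proof (pow2_ge_0 t); pose proof (pow2_ge_0 s); pose proof (pow2_ge_0 c); nra).
    nra.
Qed.

Lemma Rabs_r_le d X : (1 <= d)%nat -> 0 <= X -> X <= sqrt (INR d) ->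
  Rabs (r d X) <= (X ^ 3 / 6 + X) / sqrt (INR d) + 2 / INR d.
Proof.
  intros Hd HX HXd.
  assert (HD : 1 <= INR d) by exact (le_INR 1 d Hd).
  assert (Hw : 0 < sqrt (INR d)) by (apply sqrt_lt_R0; lra).
  assert (Hww : sqrt (INR d) * sqrt (INR d) = INR d) by (apply sqrt_sqrt; lra).
  destruct (initial_amplitude d Hd) as [t (Ht & Ht4 & Hu0 & Hv0)].
  destruct (initial_data_estimates _ _ _ _ _ _ HD Ht Ht4
              ltac:(rewrite <- !Rsqr_pow2; apply sin2_cos2) Hu0 Hv0) as [Hinit Henergy].
  pose proof (comparison_with_osc _ _ _ _ Hw Hww (is_derive_hermite_fn d)
                (is_derive_hermite_fn' d) Henergy X HX ltac:(rewrite <- Hww; nra)) as Hcmp.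
  rewrite r_eq_hermite_fn, sin_plus.
  set (u := hermite_fn d) in *. set (v := hermite_fn' d) in *. set (w := sqrt (INR d)) in *.
  set (phi := hermite_phase d) in *.
  replace (u X - (sin phi * cos (w * X) + cos phi * sin (w * X)))
    with ((u X - osc u v w X)
          + ((u 0 - sin phi) * cos (w * X) + (v 0 / w - cos phi) * sin (w * X)))
    by (unfold osc; ring).
  assert (Hosc : Rabs (u X - osc u v w X) <= (X ^ 3 / 6 + X) / w).
  { apply (Rmult_le_reg_l w); [lra|].
    replace (w * ((X ^ 3 / 6 + X) / w)) with (X ^ 3 / 6 + X) by (field; lra). exact Hcmp. }
  eapply Rle_trans; [apply Rabs_triang|]. apply Rplus_le_compat; [exact Hosc|].
  eapply Rle_trans; [apply Rabs_triang|]. rewrite !Rabs_mult.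
  pose proof (Rabs_pos (u 0 - sin phi)). pose proof (Rabs_pos (v 0 / w - cos phi)).
  assert (Rabs (cos (w * X)) <= 1) by (apply Rabs_le, COS_bound).
  assert (Rabs (sin (w * X)) <= 1) by (apply Rabs_le, SIN_bound).
  nra.
Qed.

Lemma Rabs_r_opp d x : Rabs (r d (- x)) = Rabs (r d x).
Proof.
  assert (E : r d (- x) = (-1) ^ d * r d x).
  { rewrite !r_eq_hermite_fn. unfold hermite_fn. rewrite He_opp.
    replace ((- x) ^ 2) with (x ^ 2) by ring.
    replace (hermite_phase d + sqrt (INR d) * - x)
      with ((PI - (hermite_phase d + sqrt (INR d) * x)) - INR d * PI)
      by (unfold hermite_phase; field).
    rewrite sin_sub_nPI, sin_PI_x. unfold Rdiv. ring. }
  rewrite E, Rabs_mult, pow_1_abs, Rmult_1_l. reflexivity.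
Qed.

Theorem lemmaA6 :
  exists C : R, forall (d : nat) (x : R),
    (1 <= d)%nat -> Rabs x <= sqrt (INR d) ->
    Rabs (r d x) <=
      C * Rmax (Rmax (Rabs x ^ 3 / sqrt (INR d)) (Rabs x / sqrt (INR d)))
               (Rmax (x ^ 2 / INR d) (1 / INR d)).
Proof.
  exists 4. intros d x Hd Hx.
  assert (Hr : Rabs (r d x) = Rabs (r d (Rabs x))).
  { destruct (Rle_or_lt 0 x).
    - rewrite (Rabs_pos_eq x) by lra. reflexivity.
    - rewrite (Rabs_left x), Rabs_r_opp by lra. reflexivity. }
  rewrite Hr.
  pose proof (Rabs_r_le d (Rabs x) Hd (Rabs_pos x) Hx) as Hbound.
  set (M := Rmax _ _).
  assert (M1 : Rabs x ^ 3 / sqrt (INR d) <= M) by (unfold M; eauto using Rle_trans, Rmax_l).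
  assert (M2 : Rabs x / sqrt (INR d) <= M)
    by (unfold M; eapply Rle_trans; [apply Rmax_r | apply Rmax_l]).
  assert (M3 : 1 / INR d <= M) by (unfold M; eapply Rle_trans; [apply Rmax_r | apply Rmax_r]).
  assert (HD : 1 <= INR d) by exact (le_INR 1 d Hd).
  assert (0 < 1 / INR d) by (apply Rdiv_lt_0_compat; lra).
  assert (0 < sqrt (INR d)) by (apply sqrt_lt_R0; lra).
  replace ((Rabs x ^ 3 / 6 + Rabs x) / sqrt (INR d) + 2 / INR d)
    with (/ 6 * (Rabs x ^ 3 / sqrt (INR d)) + Rabs x / sqrt (INR d) + 2 * (1 / INR d))
    in Hbound by (field; lra).
  lra.
Qed.
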